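(* For a non-negative integer $n$ and real numbers $p,x$, define \[ G_n(p,x)=\sum_{i=0}^n\binom{n}{i}\big((1-x)p+ix/n\big)^i\big(1-(1-x)p-ix/n\big)^{n-i}. \] Then for all non-negative integers $n$ and all real numbers $x$ and $p$, $G_n(p,x)=G_n(0,x)$.
   Context: Conventions: $0^0=1$; when $i=n=0$, the quantity $ix/n$ is interpreted with $0/0=1$ (so $G_0(p,x)=1$). *)

From mathcomp Require Import all_boot all_order all_algebra.
From mathcomp Require Import reals.
Set Implicit Arguments. Unset Strict Implicit. Unset Printing Implicit Defensive.
Import Order.TTheory GRing.Theory Num.Theory.
Local Open Scope ring_scope.

(* G_n(p,x) = sum_{i=0}^n C(n,i) ((1-x)p + ix/n)^i (1 - (1-x)p - ix/n)^(n-i).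
   x ^+ 0 = 1 (so 0^0 = 1); for n = 0 the single term is 1 regardless of how
   ix/n is interpreted (MathComp has 0/0 = 0), so G_0(p,x) = 1. *)
Definition G (R : realType) (n : nat) (p x : R) : R :=
  \sum_(0 <= i < n.+1)
    ('C(n, i))%:R
    * ((1 - x) * p + i%:R * x / n%:R) ^+ i
    * (1 - (1 - x) * p - i%:R * x / n%:R) ^+ (n - i).

From mathcomp Require Import all_boot all_order all_algebra.
From mathcomp Require Import reals.
From mathcomp Require Import ring.

Set Implicit Arguments.
Unset Strict Implicit.
Unset Printing Implicit Defensive.
Local Open Scope ring_scope.
Import GRing.Theory Num.Theory.

(* With c = x/n and a = (1-x)p, G_n(p,x) is the Abel-type sum
   F_n(a) = sum_i C(n,i) (a + ic)^i (1 - ic - a)^(n-i).  As a polynomial in a,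
   F_(n+1)' = (n+1) (F_n(a+c) - F_n(a)), because i C(n+1,i) = (n+1) C(n,i-1)
   and (n+1-i) C(n+1,i) = (n+1) C(n,i).  By induction F_n is constant, so its
   derivative F_(n+1)' vanishes everywhere and F_(n+1) is constant too. *)

Section AbelSum.
Variable R : comNzRingType.
Variables s c : R.

Definition abel_term (n i : nat) (a : R) : R :=
  'C(n, i)%:R * (a + i%:R * c) ^+ i * (s - i%:R * c - a) ^+ (n - i).

Definition abel_sum (n : nat) (a : R) : R :=
  \sum_(0 <= i < n.+1) abel_term n i a.

Definition abel_term_poly (n i : nat) : {poly R} :=
  'C(n, i)%:R *: (('X + (i%:R * c)%:P) ^+ i * ((s - i%:R * c)%:P - 'X) ^+ (n - i)).

Definition abel_poly (n : nat) : {poly R} :=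
  \sum_(0 <= i < n.+1) abel_term_poly n i.

Lemma horner_abel_poly n a : (abel_poly n).[a] = abel_sum n a.
Proof. by rewrite horner_sum; apply: eq_bigr => i _; rewrite !hornerE. Qed.

Lemma abel_term_small n i a : (n < i)%N -> abel_term n i a = 0.
Proof. by move=> lt_ni; rewrite /abel_term bin_small // !mul0r. Qed.

Lemma horner_deriv_abel_term_poly n i a :
  ((abel_term_poly n.+1 i)^`()).[a] =
  n.+1%:R * ((if i is j.+1 then abel_term n j (a + c) else 0) - abel_term n i a).
Proof.
rewrite /abel_term_poly /abel_term derivZ derivM !deriv_exp derivD derivB
  derivX !derivC addr0 sub0r !hornerE !hornerMn !hornerE.
case: i => [|j] /=.
  by rewrite !bin0 !subn0 mulr0n mul0r add0r sub0r; ring.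
have diag : n.+1%:R * 'C(n, j)%:R = j.+1%:R * 'C(n.+1, j.+1)%:R :> R.
  by rewrite -!natrM (mul_bin_diag n.+1).
have down : n.+1%:R * 'C(n, j.+1)%:R = (n - j)%:R * 'C(n.+1, j.+1)%:R :> R.
  by rewrite -!natrM (mul_bin_down n.+1) subSS.
have -> : a + c + j%:R * c = a + j.+1%:R * c by ring.
have -> : s - j%:R * c - (a + c) = s - j.+1%:R * c - a by ring.
rewrite subSS subnS mulrBr !mulrA diag down; ring.
Qed.

Lemma horner_deriv_abel_poly n a :
  ((abel_poly n.+1)^`()).[a] = n.+1%:R * (abel_sum n (a + c) - abel_sum n a).
Proof.
rewrite /abel_poly raddf_sum horner_sum.
under eq_bigr => i _ do rewrite horner_deriv_abel_term_poly.
rewrite -mulr_sumr sumrB big_nat_recl // [X in _ - X]big_nat_recr //=.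
by rewrite abel_term_small // addr0 add0r.
Qed.

End AbelSum.

Section Char0Polynomials.
Variable R : numDomainType.

Lemma poly_horner_eq0 (p : {poly R}) : (forall a, p.[a] = 0) -> p = 0.
Proof.
move=> p0; apply: (@roots_geq_poly_eq0 _ _ [seq k%:R | k <- iota 0 (size p)]).
- by apply/allP => a _; apply/eqP/p0.
- by rewrite map_inj_uniq ?iota_uniq // => i j /eqP; rewrite eqr_nat => /eqP.
- by rewrite size_map size_iota.
Qed.

Lemma deriv_eq0_polyC (p : {poly R}) : p^`() = 0 -> p = (p`_0)%:P.
Proof.
move=> p'0; apply/polyP => -[|i]; rewrite coefC //=.
by have /eqP := coef_deriv p i; rewrite p'0 coef0 eq_sym mulrn_eq0 => /eqP.
Qed.

Lemma abel_sum_const (s c : R) n a : abel_sum s c n a = abel_sum s c n 0.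
Proof.
elim: n a => [|n IHn] a.
  by rewrite /abel_sum !big_nat1 /abel_term !expr0.
have p'0 : (abel_poly s c n.+1)^`() = 0.
  apply: poly_horner_eq0 => b.
  by rewrite horner_deriv_abel_poly IHn [abel_sum _ _ _ b]IHn subrr mulr0.
by rewrite -!horner_abel_poly (deriv_eq0_polyC p'0) !hornerC.
Qed.

End Char0Polynomials.

Lemma G_abel_sum (R : realType) n (p x : R) :
  G n p x = abel_sum 1 (x / n%:R) n ((1 - x) * p).
Proof.
by apply: eq_bigr => i _; rewrite /abel_term !mulrA; congr (_ * _ ^+ _); ring.
Qed.

Theorem lemma2p7 (R : realType) (n : nat) (p x : R) : G n p x = G n 0 x.
Proof. by rewrite !G_abel_sum abel_sum_const [RHS]abel_sum_const. Qed.
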